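(* For every $\theta\in[0,\pi)$, the set of minimisers of $\overline Q^{\,\theta}_T$ on $\mathbb{R}^2$ is exactly the segment $[\alpha^T_{\theta,1},\alpha^T_{\theta,2}]\times\{\beta_\theta\}$, where $$\beta_\theta:=\frac{kc_1}{2c}\sin2\theta,\qquad \alpha^T_{\theta,1}:=-\frac{kc_1}{2c}(1+\cos2\theta),\qquad \alpha^T_{\theta,2}:=\frac{kc_1}{2c}(1-\cos2\theta).$$ Moreover $\min_{\mathbb{R}^2}\overline Q^{\,\theta}_T=c_1k^2\big(2-\tfrac{c_1}{c}\big)+\bar e_T$.
   Context: Fix constants $c_1>0$, $c_2>0$, $c:=c_1+c_2$, $k>0$, $\bar e_T\ge0$, $\theta\in[0,\pi)$. Let $a_\theta=\cos2\theta$, $b_\theta=\sin2\theta$ and $\bar A^\theta_T:=k\begin{pmatrix}-a_\theta&b_\theta\\ b_\theta&a_\theta\end{pmatrix}$. For matrices $M\cdot N={\rm tr}(M^{\rm T}N)$, $|M|^2=M\cdot M$. For $M\in\mathbb{R}^{2\times2}_{\rm sym}$, $L^\theta_T(M):=-2c_1M\cdot\bar A^\theta_T+2c_1k^2+\bar e_T$. For $(\alpha,\beta)\in\mathbb{R}^2$, $$\overline Q^{\,\theta}_T(\alpha,\beta):=\min_{\gamma\in\mathbb{R}}\Big\{c|M|^2+2c|\det M|+L^\theta_T(M): M=\begin{pmatrix}\alpha&\beta\\ \beta&\gamma\end{pmatrix}\Big\}.$$ *)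

From Stdlib Require Import Reals Lra ClassicalEpsilon.
Open Scope R_scope.

Record M2 := mkM2 { m11 : R; m12 : R; m21 : R; m22 : R }.

Definition mdot (M N : M2) : R :=
  m11 M * m11 N + m12 M * m12 N + m21 M * m21 N + m22 M * m22 N.

Definition mnorm2 (M : M2) : R := mdot M M.

Definition mdet (M : M2) : R := m11 M * m22 M - m12 M * m21 M.

Definition Abar (k theta : R) : M2 :=
  mkM2 (k * - cos (2*theta)) (k * sin (2*theta))
       (k * sin (2*theta)) (k * cos (2*theta)).

Definition LT (c1 k ebar theta : R) (M : M2) : R :=
  - 2 * c1 * mdot M (Abar k theta) + 2 * c1 * k ^ 2 + ebar.

Definition symM (alpha beta gamma : R) : M2 := mkM2 alpha beta beta gamma.

Definition Qfun (c1 c2 k ebar theta alpha beta gamma : R) : R :=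
  let M := symM alpha beta gamma in
  (c1 + c2) * mnorm2 M + 2 * (c1 + c2) * Rabs (mdet M) + LT c1 k ebar theta M.

Definition is_min_gamma (c1 c2 k ebar theta alpha beta q : R) : Prop :=
  (exists gamma, Qfun c1 c2 k ebar theta alpha beta gamma = q) /\
  (forall gamma, q <= Qfun c1 c2 k ebar theta alpha beta gamma).

(* \bar Q^theta_T(alpha,beta) := min_gamma Qfun; defined by choice as the
   (unique, if it exists) minimum value. *)
Definition Qbar (c1 c2 k ebar theta alpha beta : R) : R :=
  epsilon (inhabits 0) (is_min_gamma c1 c2 k ebar theta alpha beta).

(** With [M = symM α β γ] and [r = c1 k / c], one has
    [Qfun = c (|M|^2 + 2|det M| - 2 M.(Abar r θ)) + 2 c1 k^2 + ebar].  Writing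
    [x = γ - α], [y = 2β] and [(a, b) = (cos 2θ, sin 2θ)], the bracket plus [r^2]
    is the sum of squares [2(|det M| + det M) + (a y - b x)^2 + (a x + b y - r)^2],
    because [|M|^2 - 2 det M = x^2 + y^2] and [a^2 + b^2 = 1].  So the minimum
    [-r^2] is attained exactly when [(x, y) = r (a, b)] and [det M <= 0]; on that
    line [4 det M = (2α + r a)^2 - r^2], which cuts out the segment.  The minimum
    over [γ] exists because [γ ↦ γ^2 + Bγ + |Dγ + E|] is a convex parabola with
    at most one kink. *)
From Stdlib Require Import Reals Lra ClassicalEpsilon.
Open Scope R_scope.

Lemma quadratic_le_of_slope (c B z g : R) :
  0 <= c -> 0 <= (g - z) * (2 * c * z + B) -> c * z ^ 2 + B * z <= c * g ^ 2 + B * g.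
Proof.
  intros hc hslope.
  assert (0 <= c * (g - z) ^ 2) by (apply Rmult_le_pos; [lra | apply pow2_ge_0]).
  nra.
Qed.

Lemma Rabs_opp_affine (D E g : R) : Rabs (- D * g + - E) = Rabs (D * g + E).
Proof. replace (- D * g + - E) with (- (D * g + E)) by ring; apply Rabs_Ropp. Qed.

Section AbsQuadratic.

Variables c B D E : R.
Hypothesis hc : 0 < c.

Let f (g : R) : R := c * g ^ 2 + B * g + Rabs (D * g + E).

Lemma abs_quadratic_branch_min (p : R) :
  2 * c * p + B + D = 0 -> 0 <= D * p + E -> forall g, f p <= f g.
Proof.
  intros hp hpos g; unfold f.
  rewrite (Rabs_pos_eq (D * p + E)) by lra.
  pose proof (Rle_abs (D * g + E)).
  assert (c * p ^ 2 + (B + D) * p <= c * g ^ 2 + (B + D) * g).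
  { apply quadratic_le_of_slope; [lra |].
    replace (2 * c * p + (B + D)) with 0 by lra; lra. }
  lra.
Qed.

Lemma abs_quadratic_kink_min (p z : R) :
  2 * c * p + B + D = 0 -> D * p + E < 0 -> D * z + E = 0 ->
  forall g, 0 <= D * g + E -> f z <= f g.
Proof.
  intros hp hneg hz g hg; unfold f.
  rewrite hz, Rabs_R0, (Rabs_pos_eq (D * g + E)) by lra.
  (* [z] lies between the vertex [p] of the active branch and [g]. *)
  assert (hbetween : 0 <= (g - z) * (z - p)).
  { assert (hD : D <> 0) by (intro hD; rewrite hD in hneg, hz; lra).
    apply (Rmult_le_reg_l (D * D)); [exact (Rsqr_pos_lt D hD) |].
    replace (D * D * ((g - z) * (z - p))) with (D * (g - z) * (D * (z - p))) by ring.
    rewrite Rmult_0_r; apply Rmult_le_pos; lra. }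
  assert (c * z ^ 2 + (B + D) * z <= c * g ^ 2 + (B + D) * g).
  { apply quadratic_le_of_slope; [lra |].
    replace (2 * c * z + (B + D)) with (2 * c * (z - p)) by lra.
    replace ((g - z) * (2 * c * (z - p))) with (2 * c * ((g - z) * (z - p))) by ring.
    apply Rmult_le_pos; lra. }
  lra.
Qed.

End AbsQuadratic.

Lemma abs_quadratic_has_min (c B D E : R) : 0 < c ->
  exists g0, forall g,
    c * g0 ^ 2 + B * g0 + Rabs (D * g0 + E) <= c * g ^ 2 + B * g + Rabs (D * g + E).
Proof.
  intro hc.
  set (p1 := - (B + D) / (2 * c)); set (p2 := - (B - D) / (2 * c)).
  assert (hp1 : 2 * c * p1 + B + D = 0) by (unfold p1; field; lra).
  assert (hp2 : 2 * c * p2 + B + - D = 0) by (unfold p2; field; lra).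
  destruct (Rle_dec 0 (D * p1 + E)) as [h1 | h1].
  { exists p1; exact (abs_quadratic_branch_min c B D E hc p1 hp1 h1). }
  destruct (Rle_dec (D * p2 + E) 0) as [h2 | h2].
  { exists p2; intro g; rewrite <- !(Rabs_opp_affine D E).
    apply (abs_quadratic_branch_min c B (- D) (- E) hc p2 hp2); lra. }
  assert (hD : D <> 0) by (intro hD; rewrite hD in h1, h2; lra).
  exists (- E / D); intro g.
  assert (hz : D * (- E / D) + E = 0) by (field; exact hD).
  destruct (Rle_dec 0 (D * g + E)) as [hg | hg].
  - exact (abs_quadratic_kink_min c B D E hc p1 _ hp1 ltac:(lra) hz g hg).
  - rewrite <- !(Rabs_opp_affine D E).
    apply (abs_quadratic_kink_min c B (- D) (- E) hc p2); lra.
Qed.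

Lemma cos_sq_add_sin_sq (x : R) : cos x ^ 2 + sin x ^ 2 = 1.
Proof. rewrite <- (sin2_cos2 x); unfold Rsqr; ring. Qed.

Lemma coords_of_unit_frame (a b x y r : R) :
  a ^ 2 + b ^ 2 = 1 -> a * y - b * x = 0 -> a * x + b * y = r -> x = r * a /\ y = r * b.
Proof.
  intros hab hperp hpar; rewrite <- hpar; split.
  - transitivity ((a ^ 2 + b ^ 2) * x); [rewrite hab; ring |].
    transitivity (a * (a * x + b * y) - b * (a * y - b * x)); [ring |].
    rewrite hperp; ring.
  - transitivity ((a ^ 2 + b ^ 2) * y); [rewrite hab; ring |].
    transitivity (b * (a * x + b * y) + a * (a * y - b * x)); [ring |].
    rewrite hperp; ring.
Qed.

Lemma det_on_minimising_line (a b r alpha : R) : a ^ 2 + b ^ 2 = 1 ->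
  4 * (alpha * (alpha + r * a) - r / 2 * b * (r / 2 * b)) = (2 * alpha + r * a) ^ 2 - r ^ 2.
Proof.
  intro hab; replace (r ^ 2) with (r ^ 2 * (a ^ 2 + b ^ 2)) by (rewrite hab; ring).
  field.
Qed.

Definition penalty (r theta alpha beta gamma : R) : R :=
  let M := symM alpha beta gamma in
  mnorm2 M + 2 * Rabs (mdet M) - 2 * mdot M (Abar r theta).

Section Penalty.

Variables r theta : R.

Let a := cos (2 * theta).
Let b := sin (2 * theta).
Let hab : a ^ 2 + b ^ 2 = 1 := cos_sq_add_sin_sq (2 * theta).

Lemma penalty_sos (alpha beta gamma : R) :
  let d := alpha * gamma - beta * beta in
  let x := gamma - alpha in
  let y := 2 * beta in
  penalty r theta alpha beta gamma + r ^ 2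
  = 2 * (Rabs d + d) + (a * y - b * x) ^ 2 + (a * x + b * y - r) ^ 2.
Proof.
  intros d x y.
  assert (hdiff : 2 * (Rabs d + d) + (a * y - b * x) ^ 2 + (a * x + b * y - r) ^ 2
                  - (penalty r theta alpha beta gamma + r ^ 2)
                  = (a ^ 2 + b ^ 2 - 1) * (x ^ 2 + y ^ 2)).
  { unfold penalty, mnorm2, mdot, mdet, symM, Abar, d, x, y, a, b; simpl; ring. }
  rewrite hab in hdiff; lra.
Qed.

Lemma penalty_ge (alpha beta gamma : R) : - r ^ 2 <= penalty r theta alpha beta gamma.
Proof.
  pose proof (penalty_sos alpha beta gamma) as hsos; cbv zeta in hsos.
  pose proof (Rle_abs (- (alpha * gamma - beta * beta))) as hdabs.
  rewrite Rabs_Ropp in hdabs.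
  pose proof (pow2_ge_0 (a * (2 * beta) - b * (gamma - alpha))).
  pose proof (pow2_ge_0 (a * (gamma - alpha) + b * (2 * beta) - r)).
  lra.
Qed.

Lemma penalty_eq_min_iff (alpha beta gamma : R) : 0 <= r ->
  penalty r theta alpha beta gamma = - r ^ 2 <->
  gamma = alpha + r * a /\ beta = r / 2 * b /\ - r <= 2 * alpha + r * a <= r.
Proof.
  intro hr.
  pose proof (det_on_minimising_line a b r alpha hab) as hdet.
  pose proof (penalty_sos alpha beta gamma) as hsos; cbv zeta in hsos.
  set (d := alpha * gamma - beta * beta) in hsos.
  pose proof (Rle_abs (- d)) as hdabs; rewrite Rabs_Ropp in hdabs.
  split.
  - intro hmin.
    pose proof (pow2_ge_0 (a * (2 * beta) - b * (gamma - alpha))).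
    pose proof (pow2_ge_0 (a * (gamma - alpha) + b * (2 * beta) - r)).
    destruct (coords_of_unit_frame a b (gamma - alpha) (2 * beta) r hab)
      as [hx hy]; [nra | nra |].
    assert (hg : gamma = alpha + r * a) by lra.
    assert (hb : beta = r / 2 * b) by lra.
    assert (hd : 4 * d = (2 * alpha + r * a) ^ 2 - r ^ 2)
      by (unfold d; rewrite hg, hb; exact hdet).
    assert (d <= 0) by (pose proof (Rabs_pos d); lra).
    repeat split; [exact hg | exact hb | nra | nra].
  - intros [hg [hb hseg]].
    assert (hd : d <= 0) by (unfold d; rewrite hg, hb; nra).
    rewrite (Rabs_left1 d hd) in hsos; rewrite hg, hb in hsos |- *.
    replace (a * (alpha + r * a - alpha) + b * (2 * (r / 2 * b)))
      with (r * (a ^ 2 + b ^ 2)) in hsos by field.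
    rewrite hab in hsos; lra.
Qed.

Lemma penalty_has_min_gamma (alpha beta : R) : exists gamma0, forall gamma,
  penalty r theta alpha beta gamma0 <= penalty r theta alpha beta gamma.
Proof.
  set (K := alpha ^ 2 + 2 * beta ^ 2 + 2 * r * a * alpha - 4 * r * b * beta).
  assert (hshape : forall gamma, penalty r theta alpha beta gamma =
    1 * gamma ^ 2 + (- 2 * r * a) * gamma
    + Rabs ((2 * alpha) * gamma + - (2 * beta * beta)) + K).
  { intro gamma.
    replace ((2 * alpha) * gamma + - (2 * beta * beta))
      with (2 * (alpha * gamma - beta * beta)) by ring.
    rewrite Rabs_mult, (Rabs_pos_eq 2) by lra.
    unfold penalty, mnorm2, mdot, mdet, symM, Abar, K, a, b; simpl; ring. }
  destruct (abs_quadratic_has_min 1 (- 2 * r * a) (2 * alpha) (- (2 * beta * beta)))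
    as [gamma0 hgamma0]; [lra |].
  exists gamma0; intro gamma; rewrite !hshape.
  pose proof (hgamma0 gamma); lra.
Qed.

End Penalty.

Definition Qmin (c1 c2 k ebar : R) : R := c1 * k ^ 2 * (2 - c1 / (c1 + c2)) + ebar.

Section Qbar.

Variables c1 c2 k ebar theta : R.
Hypothesis hc : 0 < c1 + c2.
Hypothesis hc1k : 0 <= c1 * k.

Let r := c1 * k / (c1 + c2).

Let r_ge0 : 0 <= r.
Proof. unfold r; apply Rmult_le_pos; [exact hc1k | apply Rlt_le, Rinv_0_lt_compat, hc]. Qed.

Lemma Qfun_penalty (alpha beta gamma : R) :
  Qfun c1 c2 k ebar theta alpha beta gamma
  = (c1 + c2) * penalty r theta alpha beta gamma + 2 * c1 * k ^ 2 + ebar.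
Proof.
  unfold Qfun, LT, penalty, mnorm2, mdot, mdet, symM, Abar, r; simpl; field; lra.
Qed.

Lemma Qmin_penalty : Qmin c1 c2 k ebar = (c1 + c2) * - r ^ 2 + 2 * c1 * k ^ 2 + ebar.
Proof. unfold Qmin, r; field; lra. Qed.

Lemma Qfun_ge_Qmin (alpha beta gamma : R) :
  Qmin c1 c2 k ebar <= Qfun c1 c2 k ebar theta alpha beta gamma.
Proof.
  rewrite Qfun_penalty, Qmin_penalty.
  pose proof (Rmult_le_compat_l _ _ _ (Rlt_le _ _ hc) (penalty_ge r theta alpha beta gamma)).
  lra.
Qed.

Lemma Qfun_eq_Qmin_iff (alpha beta gamma : R) :
  Qfun c1 c2 k ebar theta alpha beta gamma = Qmin c1 c2 k ebar <->
  gamma = alpha + r * cos (2 * theta) /\ beta = r / 2 * sin (2 * theta) /\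
  - r <= 2 * alpha + r * cos (2 * theta) <= r.
Proof.
  rewrite <- (penalty_eq_min_iff r theta alpha beta gamma r_ge0).
  rewrite Qfun_penalty, Qmin_penalty; split; intro h.
  - apply (Rmult_eq_reg_l (c1 + c2)); lra.
  - rewrite h; ring.
Qed.

Lemma is_min_gamma_Qbar (alpha beta : R) :
  is_min_gamma c1 c2 k ebar theta alpha beta (Qbar c1 c2 k ebar theta alpha beta).
Proof.
  unfold Qbar; apply epsilon_spec.
  destruct (penalty_has_min_gamma r theta alpha beta) as [gamma0 hgamma0].
  exists (Qfun c1 c2 k ebar theta alpha beta gamma0); split; [now exists gamma0 |].
  intro gamma; rewrite !Qfun_penalty.
  pose proof (Rmult_le_compat_l _ _ _ (Rlt_le _ _ hc) (hgamma0 gamma)).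
  lra.
Qed.

Lemma Qbar_ge_Qmin (alpha beta : R) :
  Qmin c1 c2 k ebar <= Qbar c1 c2 k ebar theta alpha beta.
Proof.
  destruct (is_min_gamma_Qbar alpha beta) as [[gamma <-] _].
  apply Qfun_ge_Qmin.
Qed.

Lemma Qbar_eq_Qmin_iff (alpha beta : R) :
  Qbar c1 c2 k ebar theta alpha beta = Qmin c1 c2 k ebar <->
  beta = k * c1 / (2 * (c1 + c2)) * sin (2 * theta) /\
  - (k * c1 / (2 * (c1 + c2))) * (1 + cos (2 * theta)) <= alpha /\
  alpha <= k * c1 / (2 * (c1 + c2)) * (1 - cos (2 * theta)).
Proof.
  replace (k * c1 / (2 * (c1 + c2))) with (r / 2) by (unfold r; field; lra).
  destruct (is_min_gamma_Qbar alpha beta) as [[gamma hgamma] hmin].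
  split.
  - intro hQ; rewrite <- hgamma in hQ.
    destruct (proj1 (Qfun_eq_Qmin_iff alpha beta gamma) hQ) as [_ [hb hseg]].
    repeat split; lra.
  - intros [hb hseg].
    pose proof (hmin (alpha + r * cos (2 * theta))) as hle.
    rewrite (proj2 (Qfun_eq_Qmin_iff alpha beta _)) in hle by (repeat split; lra).
    pose proof (Qbar_ge_Qmin alpha beta); lra.
Qed.

Lemma Qmin_attained : exists alpha beta, Qbar c1 c2 k ebar theta alpha beta = Qmin c1 c2 k ebar.
Proof.
  exists (- (r / 2) * cos (2 * theta)), (r / 2 * sin (2 * theta)).
  apply Qbar_eq_Qmin_iff.
  replace (k * c1 / (2 * (c1 + c2))) with (r / 2) by (unfold r; field; lra).
  pose proof (COS_bound (2 * theta)); repeat split; nra.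
Qed.

End Qbar.

Theorem lemma3p3 (c1 c2 k ebar theta : R)
  (hc1 : 0 < c1) (hc2 : 0 < c2) (hk : 0 < k) (he : 0 <= ebar)
  (hth0 : 0 <= theta) (hth1 : theta < PI) :
  let c := c1 + c2 in
  let Q := Qbar c1 c2 k ebar theta in
  (forall alpha beta, is_min_gamma c1 c2 k ebar theta alpha beta (Q alpha beta)) /\
  (forall alpha beta,
     (forall a b, Q alpha beta <= Q a b) <->
     (beta = k * c1 / (2 * c) * sin (2 * theta) /\
      - (k * c1 / (2 * c)) * (1 + cos (2 * theta)) <= alpha /\
      alpha <= k * c1 / (2 * c) * (1 - cos (2 * theta)))) /\
  (forall a b, c1 * k ^ 2 * (2 - c1 / c) + ebar <= Q a b) /\
  (exists a b, Q a b = c1 * k ^ 2 * (2 - c1 / c) + ebar).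
Proof.
  intros c Q.
  assert (hc : 0 < c1 + c2) by lra.
  assert (hc1k : 0 <= c1 * k) by nra.
  pose proof (Qbar_ge_Qmin c1 c2 k ebar theta hc) as hge.
  pose proof (Qmin_attained c1 c2 k ebar theta hc hc1k) as hattained.
  split; [exact (is_min_gamma_Qbar c1 c2 k ebar theta hc) |].
  split; [| split; [exact hge | exact hattained]].
  intros alpha beta.
  transitivity (Q alpha beta = Qmin c1 c2 k ebar);
    [| exact (Qbar_eq_Qmin_iff c1 c2 k ebar theta hc hc1k alpha beta)].
  split.
  - intro hle; destruct hattained as [a0 [b0 hmin]].
    pose proof (hle a0 b0); pose proof (hge alpha beta); unfold Q in *; lra.
  - intros hQ a b; rewrite hQ; apply hge.
Qed.
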